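(* For every subset $I$ of $\mathbb{N}$, the monoid $M_I=\langle a,b,c,d \mid ab^ic=ab^id \ (i\in I)\rangle$ is a finitely generated strongly $0$-hyperbolic monoid.
   Context: Directed graphs may have loops and multiple edges; $d(u,v)$ is the length of a shortest directed path from $u$ to $v$ ($\infty$ if none). Out-ball $\overrightarrow{\mathcal{B}}_r(x)=\{y : d(x,y)\le r\}$, in-ball $\overleftarrow{\mathcal{B}}_r(x)=\{y : d(y,x)\le r\}$, extended to sets by union. A path $[x_0,\dots,x_n]$ is a geodesic if $n=d(x_0,x_n)$. A directed geodesic triangle is an ordered triple $(p,q,r)$ of geodesics with the end of $p$ equal to the start of $q$ and $p\circ q$ having the same start and end as $r$; it is $0$-thin if every vertex of $r$ lies in $\overrightarrow{\mathcal{B}}_0(p)\cup\overleftarrow{\mathcal{B}}_0(q)$, every vertex of $p$ lies in $\overrightarrow{\mathcal{B}}_0(r)\cup\overleftarrow{\mathcal{B}}_0(q)$, and every vertex of $q$ lies in $\overrightarrow{\mathcal{B}}_0(p)\cup\overleftarrow{\mathcal{B}}_0(r)$. A monoid is strongly $0$-hyperbolic if its right Cayley graph w.r.t. some finite generating set $A$ (vertex set the monoid, edge $m\to n$ for each $a\in A$ with $ma=n$) has all directed geodesic triangles $0$-thin. *)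

From Stdlib Require Import ClassicalEpsilon FunctionalExtensionality
  PropExtensionality ProofIrrelevance.
From Stdlib Require List.
From mathcomp Require Import all_boot.

Set Implicit Arguments.
Unset Strict Implicit.
Unset Printing Implicit Defensive.

Record monoid := Monoid {
  carrier :> Type;
  mmul : carrier -> carrier -> carrier;
  mone : carrier;
  mmulA : forall x y z, mmul x (mmul y z) = mmul (mmul x y) z;
  mmul1m : forall x, mmul mone x = x;
  mmulm1 : forall x, mmul x mone = x
}.

Section CayleyGraph.
Variable M : monoid.

Definition mprod (s : seq M) : M := foldr (@mmul M) (@mone M) s.

Definition generates (A : seq M) : Prop :=
  forall m : M, exists s : seq M, (forall x, List.In x s -> List.In x A) /\ mprod s = m.

(* Edge of the right Cayley graph w.r.t. A: m -> n iff m a = n for some a in A.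
   (Multiple edges do not matter for distances / vertex paths.) *)
Definition cedge (A : seq M) (m n : M) : Prop :=
  exists a, List.In a A /\ mmul m a = n.

Fixpoint cwalk (A : seq M) (x : M) (l : seq M) : Prop :=
  match l with
  | [::] => True
  | y :: l' => cedge A x y /\ cwalk A y l'
  end.

Definition dist_le (A : seq M) (u v : M) (r : nat) : Prop :=
  exists l, cwalk A u l /\ last u l = v /\ size l <= r.

Definition geodesic (A : seq M) (x : M) (l : seq M) : Prop :=
  cwalk A x l /\
  forall l', cwalk A x l' -> last x l' = last x l -> size l <= size l'.

Definition out_ball (A : seq M) (r : nat) (S : seq M) (y : M) : Prop :=
  exists x, List.In x S /\ dist_le A x y r.
Definition in_ball (A : seq M) (r : nat) (S : seq M) (y : M) : Prop :=
  exists x, List.In x S /\ dist_le A y x r.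

(* directed geodesic triangle (p, q, r) with p = xp::lp, q = xq::lq,
   r = xr::lr *)
Definition geodesic_triangle (A : seq M) (xp : M) (lp : seq M)
  (xq : M) (lq : seq M) (xr : M) (lr : seq M) : Prop :=
  geodesic A xp lp /\ geodesic A xq lq /\ geodesic A xr lr /\
  last xp lp = xq /\ xr = xp /\ last xr lr = last xq lq.

Definition thin_triangle (A : seq M) (delta : nat) (xp : M) (lp : seq M)
  (xq : M) (lq : seq M) (xr : M) (lr : seq M) : Prop :=
  [/\ (forall v, List.In v (xr :: lr) ->
         out_ball A delta (xp :: lp) v \/ in_ball A delta (xq :: lq) v),
      (forall v, List.In v (xp :: lp) ->
         out_ball A delta (xr :: lr) v \/ in_ball A delta (xq :: lq) v) &
      (forall v, List.In v (xq :: lq) ->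
         out_ball A delta (xp :: lp) v \/ in_ball A delta (xr :: lr) v)].

Definition finitely_generated : Prop := exists A : seq M, generates A.

Definition strongly_hyperbolic (delta : nat) : Prop :=
  exists A : seq M, generates A /\
    forall xp lp xq lq xr lr,
      geodesic_triangle A xp lp xq lq xr lr ->
      thin_triangle A delta xp lp xq lq xr lr.

End CayleyGraph.

Inductive letter := La | Lb | Lc | Ld.
Definition word := seq letter.

Inductive rel_MI (I : nat -> Prop) : word -> word -> Prop :=
| rel_MI_intro i : I i ->
    rel_MI I ([:: La] ++ nseq i Lb ++ [:: Lc]) ([:: La] ++ nseq i Lb ++ [:: Ld]).

Inductive cong (I : nat -> Prop) : word -> word -> Prop :=
| cong_base u v : rel_MI I u v -> cong I u v
| cong_refl u : cong I u u
| cong_sym u v : cong I u v -> cong I v u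
| cong_trans u v w : cong I u v -> cong I v w -> cong I u w
| cong_ctx x y u v : cong I u v -> cong I (x ++ u ++ y) (x ++ v ++ y).

Section Quotient.
Variable I : nat -> Prop.

Definition MI_car := { C : word -> Prop | exists w, C = cong I w }.

Definition cls (w : word) : MI_car := exist _ (cong I w) (ex_intro _ w erefl).

Definition rep (C : MI_car) : word :=
  proj1_sig (constructive_indefinite_description _ (proj2_sig C)).

Lemma cong_cls u v : cong I u v -> cls u = cls v.
Proof.
move=> h; apply: eq_sig_hprop => [C p q|]; first exact: proof_irrelevance.
rewrite /=; apply: functional_extensionality => w.
apply: propositional_extensionality; split => hw.
- by apply: cong_trans (cong_sym h) hw.
- by apply: cong_trans h hw.
Qed.

Lemma cls_rep C : cls (rep C) = C.
Proof.
apply: eq_sig_hprop => [D p q|]; first exact: proof_irrelevance.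
rewrite /rep; case: (constructive_indefinite_description _ _) => w /= ->.
by [].
Qed.

Lemma rep_cls u : cong I (rep (cls u)) u.
Proof.
rewrite /rep; case: (constructive_indefinite_description _ _) => w /= e.
have h : cong I u u by apply: cong_refl.
by rewrite e in h.
Qed.

Definition MI_mul (C D : MI_car) : MI_car := cls (rep C ++ rep D).
Definition MI_one : MI_car := cls [::].

Lemma cong_cat u u' v v' : cong I u u' -> cong I v v' -> cong I (u ++ v) (u' ++ v').
Proof.
move=> hu hv; apply: (@cong_trans _ _ (u' ++ v)).
- by have := cong_ctx [::] v hu; rewrite /= ?cats0.
- by have := cong_ctx u' [::] hv; rewrite /= ?cats0.
Qed.

Lemma MI_mul_cls u v : MI_mul (cls u) (cls v) = cls (u ++ v).
Proof. by apply: cong_cls; apply: cong_cat; apply: rep_cls. Qed.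

Lemma MI_mulA x y z : MI_mul x (MI_mul y z) = MI_mul (MI_mul x y) z.
Proof.
rewrite -(cls_rep x) -(cls_rep y) -(cls_rep z) !MI_mul_cls.
by rewrite catA.
Qed.

Lemma MI_mul1 x : MI_mul MI_one x = x.
Proof. by rewrite -(cls_rep x) /MI_one MI_mul_cls. Qed.

Lemma MI_mul1r x : MI_mul x MI_one = x.
Proof. by rewrite -(cls_rep x) /MI_one MI_mul_cls cats0. Qed.

End Quotient.

Definition M_I (I : nat -> Prop) : monoid :=
  @Monoid (MI_car I) (@MI_mul I) (MI_one I)
    (@MI_mulA I) (@MI_mul1 I) (@MI_mul1r I).

From mathcomp Require Import all_boot zify.
From Stdlib Require List.

(* Both sides of a defining relation a b^i c = a b^i d have the same length and
   differ only in their last letter, so congruent words have the same length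
   and congruent prefixes of every length.  Hence two paths of the right Cayley
   graph (letters as generators) with the same endpoints visit the same
   vertices in the same order: the k-th vertex of r is the k-th vertex of
   p ∘ q.  So every triangle of paths, geodesic or not, is 0-thin. *)

Lemma out_ball0 (M : monoid) (A S : seq M) v : List.In v S -> out_ball A 0 S v.
Proof. by move=> Sv; exists v; split => //; exists [::]. Qed.

Lemma in_ball0 (M : monoid) (A S : seq M) v : List.In v S -> in_ball A 0 S v.
Proof. by move=> Sv; exists v; split => //; exists [::]. Qed.

Lemma take_size_add_cat (T : Type) (s1 s2 : seq T) n :
  take (size s1 + n) (s1 ++ s2) = s1 ++ take n s2.
Proof. by rewrite takeD take_size_cat // drop_size_cat. Qed.

Section MonoidMI.
Variable I : nat -> Prop.

Lemma cong_size_take u v :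
  cong I u v -> size u = size v /\ forall k, cong I (take k u) (take k v).
Proof.
elim=> {u v} [u v [i Ii] | u | u v _ [-> Huv] | u v w _ [-> Huv] _ [-> Hvw]
             | x y u v _ [Euv Huv]].
- split=> [|k]; first by rewrite !size_cat.
  rewrite !(catA [:: La]); case: (leqP k (size ([:: La] ++ nseq i Lb))) => Hk.
    by rewrite !(takel_cat _ Hk); apply: cong_refl.
  move: Hk; rewrite size_cat /= => Hk.
  by rewrite !take_oversize /= -?catA;
    [exact: cong_base (rel_MI_intro Ii) | rewrite size_cat /=; lia..].
- by split=> // k; apply: cong_refl.
- by split=> // k; apply: cong_sym.
- by split=> // k; apply: cong_trans (Huv k) (Hvw k).
- split=> [|k]; first by rewrite !size_cat Euv.
  have Hc : cong I u v by have := Huv (size u); rewrite {2}Euv !take_size.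
  rewrite !take_cat Euv; case: ifP => _; first exact: cong_refl.
  case: ifP => _.
    by have := cong_ctx x [::] (Huv (k - size x)); rewrite !cats0.
  by have := cong_ctx x (take (k - size x - size v) y) Hc; rewrite !catA.
Qed.

Lemma cls_eq_cong u v : cls I u = cls I v -> cong I u v.
Proof.
move=> /(f_equal (@proj1_sig _ _)) /= Euv.
by apply: cong_sym; rewrite -Euv; apply: cong_refl.
Qed.

Lemma cls_rep_cat u t : cls I (rep (cls I u) ++ t) = cls I (u ++ t).
Proof. by apply: cong_cls; apply: cong_cat; [apply: rep_cls | apply: cong_refl]. Qed.

Definition letter_cls (g : letter) : M_I I := cls I [:: g].

Definition letter_gens : seq (M_I I) :=
  [:: letter_cls La; letter_cls Lb; letter_cls Lc; letter_cls Ld].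

Lemma letter_cls_gens g : List.In (letter_cls g) letter_gens.
Proof. by case: g => /=; tauto. Qed.

Lemma letter_gensP a : List.In a letter_gens -> exists g, a = letter_cls g.
Proof. by move=> /= [<-|[<-|[<-|[<-|[]]]]]; eexists. Qed.

Lemma mprod_letters (w : word) : mprod (map letter_cls w) = cls I w.
Proof. by elim: w => //= g w ->; apply: (MI_mul_cls I [:: g] w). Qed.

Lemma letter_gens_generate : generates letter_gens.
Proof.
move=> m; exists (map letter_cls (rep m)); split; last by rewrite mprod_letters cls_rep.
move=> x; elim: (rep m) => [|g w IHw] //= [<-|/IHw //]; exact: letter_cls_gens.
Qed.

Lemma cls_rep_mul_letter (x : M_I I) g t :
  cls I (rep (mmul x (letter_cls g)) ++ t) = cls I (rep x ++ g :: t).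
Proof.
rewrite /= /MI_mul cls_rep_cat -catA.
apply/cong_cls/cong_cat; first exact: cong_refl.
exact: cong_cat (rep_cls I [:: g]) (cong_refl I t).
Qed.

Lemma cwalk_letters (x : M_I I) l : cwalk letter_gens x l ->
  exists w : word,
    (forall v, List.In v (x :: l) <->
       exists2 k, k <= size w & v = cls I (rep x ++ take k w))
    /\ last x l = cls I (rep x ++ w).
Proof.
elim: l x => [|y l IHl] x /=.
  move=> _; exists [::]; split; last by rewrite cats0 cls_rep.
  move=> v; split; first by case=> // <-; exists 0; rewrite ?cats0 ?cls_rep.
  by case=> k _ ->; rewrite /= cats0 cls_rep; left.
case=> [[a [/letter_gensP [g ->] <-]] Hwalk].
have [w [Hvert Hlast]] := IHl _ Hwalk.
exists (g :: w); split; last by rewrite Hlast cls_rep_mul_letter.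
move=> v; split.
- case=> [<- | /Hvert [k Hk ->]]; first by exists 0; rewrite ?cats0 ?cls_rep.
  by exists k.+1; rewrite // cls_rep_mul_letter.
- case=> [[_ -> | k Hk ->]]; first by left; rewrite cats0 cls_rep.
  by right; apply/Hvert; exists k; rewrite // cls_rep_mul_letter.
Qed.

Lemma walk_triangle_thin xp lp xq lq lr :
  cwalk letter_gens xp lp -> cwalk letter_gens xq lq -> cwalk letter_gens xp lr ->
  last xp lp = xq -> last xp lr = last xq lq ->
  thin_triangle letter_gens 0 xp lp xq lq xp lr.
Proof.
move=> /cwalk_letters [up [Hp Elp]] /cwalk_letters [uq [Hq Elq]]
       /cwalk_letters [ur [Hr Elr]] Epq Eend.
set X := rep xp in Hp Elp Hr Elr.
have Eq t : cls I (rep xq ++ t) = cls I (X ++ up ++ t).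
  by rewrite -Epq Elp cls_rep_cat catA.
have [Esize Htake] : size (X ++ ur) = size (X ++ up ++ uq) /\
    forall k, cong I (take k (X ++ ur)) (take k (X ++ up ++ uq)).
  by apply/cong_size_take/cls_eq_cong; rewrite -Elr Eend Elq Eq.
have {}Esize : size ur = size up + size uq by move: Esize; rewrite !size_cat; lia.
have Hvert k : cls I (X ++ take k ur) = cls I (X ++ take k (up ++ uq)).
  by apply: cong_cls; have := Htake (size X + k); rewrite !take_size_add_cat.
split.
- move=> v /Hr [k Hk ->]; rewrite Hvert.
  case: (leqP k (size up)) => Hkp.
    by left; apply/out_ball0/Hp; exists k; rewrite ?takel_cat.
  right; apply/in_ball0/Hq; exists (k - size up); first lia.
  by rewrite Eq take_cat ltnNge (ltnW Hkp).
- move=> v /Hp [k Hk ->]; left; apply/out_ball0/Hr; exists k; first lia.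
  by rewrite Hvert takel_cat.
- move=> v /Hq [k Hk ->]; right; apply/in_ball0/Hr; exists (size up + k); first lia.
  by rewrite Hvert Eq take_size_add_cat.
Qed.

End MonoidMI.

Theorem proposition7p3 (I : nat -> Prop) :
  finitely_generated (M_I I) /\ strongly_hyperbolic (M_I I) 0.
Proof.
have Hgen := letter_gens_generate I.
split; first by exists (letter_gens I).
exists (letter_gens I); split=> // xp lp xq lq xr lr.
case=> [[Hp _] [[Hq _] [[Hr _] [Epq [Exr Eend]]]]]; subst xr.
exact: walk_triangle_thin.
Qed.
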